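(* Fix $k\in\{0,1,\infty\}$ and let $\mathbb{L}=\{L\in\mathbb{R}^{n_x\times n_y}:\rho(A-LC)<1\}$. For every $L\in\mathbb{L}$, $$J_k(L)=\max\Big\{\lambda\in\mathbb{R}_+:\ \tfrac12 D_a^\top\Phi(k,L)^\top\Sigma_{r_\omega}^{-1}(L)\Phi(k,L)D_a-\lambda D_a^\top W D_a\succeq 0\Big\}.$$ Consequently, the observer design problem $\max_{L\in\mathbb{R}^{n_x\times n_y}}\{J_k(L):\rho(A-LC)<1\}$ can be reformulated as the joint problem $$\max_{L\in\mathbb{R}^{n_x\times n_y},\ \lambda\in\mathbb{R}_+}\ \lambda\quad\text{s.t.}\quad \tfrac12 D_a^\top\Phi(k,L)^\top\Sigma_{r_\omega}^{-1}(L)\Phi(k,L)D_a-\lambda D_a^\top W D_a\succeq 0,\qquad \rho(A-LC)<1,$$ which has the same optimal value.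
   Context: Consider the discrete-time system $x(k+1)=Ax(k)+Bu(k)+B_\omega\omega(k)$, $y(k)=Cx(k)+D_\omega\omega(k)+y_a(k)$, with $x(k)\in\mathbb{R}^{n_x}$, $y(k)\in\mathbb{R}^{n_y}$, $\omega(k)\in\mathbb{R}^{n_\omega}$ i.i.d. Gaussian $\mathcal N(0,I)$, $(A,C)$ detectable and $(A,B_\omega)$ stabilizable. An observer $\hat x(k+1)=A\hat x(k)+Bu(k)+L(y(k)-C\hat x(k))$ with gain $L\in\mathbb{R}^{n_x\times n_y}$ produces the residual $r(k)=y(k)-C\hat x(k)$. The attack is $y_a(k)=0$ for $k<0$ and $y_a(k)=D_a\bar a$ for $k\ge 0$, where $\bar a\in\mathbb{R}^{n_a}$ and $D_a\in\mathbb{R}^{n_y\times n_a}$ has entries $(j_i,i)=1$ for the indices $j_1<\dots<j_{n_a}$ of compromised sensors and all other entries $0$. $W\in\mathbb{R}^{n_y\times n_y}$ is symmetric positive semidefinite. $\rho(\cdot)$ is the spectral radius and $\mathbb{R}_+$ the positive reals. For $L$ with $\rho(A-LC)<1$, $\Sigma_{\tilde x}(L)$ is the solution of $\Sigma=(A-LC)\Sigma(A-LC)^\top+(B_\omega-LD_\omega)(B_\omega-LD_\omega)^\top$ and $\Sigma_{r_\omega}(L)=C\Sigma_{\tilde x}(L)C^\top+D_\omega D_\omega^\top$ (assumed invertible where its inverse appears). Define $\Phi(0,L)=I$, $\Phi(k,L)=I-C\sum_{l=0}^{k-1}(A-LC)^{k-l-1}L$ for $k\ge1$, and $\Phi(\infty,L)=\lim_{k\to\infty}\Phi(k,L)=I-C(I-A+LC)^{-1}L$.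 Define $$J_k(L)=\min_{\bar a\in\mathbb{R}^{n_a}}\ \tfrac12\bar a^\top D_a^\top\Phi(k,L)^\top\Sigma_{r_\omega}^{-1}(L)\Phi(k,L)D_a\bar a\quad\text{s.t.}\quad \bar a^\top D_a^\top W D_a\bar a\ge 1,$$ the smallest Kullback–Leibler divergence between attacked and attack-free residuals at time $k$ over attacks of impact at least $1$. *)

From HB Require Import structures.
From mathcomp Require Import all_boot all_order all_algebra.
From mathcomp Require Import complex.
From mathcomp Require Import boolp classical_sets reals constructive_ereal ereal.
Set Implicit Arguments. Unset Strict Implicit. Unset Printing Implicit Defensive.
Import Order.TTheory GRing.Theory Num.Theory.
Local Open Scope ring_scope.
Local Open Scope complex_scope.

Section Defs.
Variable R : realType.

Definition cmx {m n} (M : 'M[R]_(m, n)) : 'M[R[i]]_(m, n) :=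
  map_mx (fun x : R => x%:C) M.

Definition spec_rad_lt1 {n} (M : 'M[R]_n) : Prop :=
  forall z : R[i], eigenvalue (cmx M) z -> `|z| < 1.

Definition detectable {nx ny} (A : 'M[R]_nx) (C : 'M[R]_(ny, nx)) : Prop :=
  forall z : R[i], 1 <= `|z| -> \rank (col_mx (cmx A - z%:M) (cmx C)) = nx.

Definition stabilizable {nx nw} (A : 'M[R]_nx) (B : 'M[R]_(nx, nw)) : Prop :=
  forall z : R[i], 1 <= `|z| -> \rank (row_mx (cmx A - z%:M) (cmx B)) = nx.

Definition psd {n} (M : 'M[R]_n) : Prop :=
  forall v : 'cV[R]_n, 0 <= (v^T *m M *m v) 0 0.

Definition Sigma_x {nx ny nw} (A : 'M[R]_nx) (C : 'M[R]_(ny, nx))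
  (Bw : 'M[R]_(nx, nw)) (Dw : 'M[R]_(ny, nw)) (L : 'M[R]_(nx, ny)) : 'M[R]_nx :=
  xget 0 [set S : 'M[R]_nx | S = (A - L *m C) *m S *m (A - L *m C)^T
                                 + (Bw - L *m Dw) *m (Bw - L *m Dw)^T].

Definition Sigma_r {nx ny nw} (A : 'M[R]_nx) (C : 'M[R]_(ny, nx))
  (Bw : 'M[R]_(nx, nw)) (Dw : 'M[R]_(ny, nw)) (L : 'M[R]_(nx, ny)) : 'M[R]_ny :=
  C *m Sigma_x A C Bw Dw L *m C^T + Dw *m Dw^T.

Inductive time := TFin of nat | TInf.

Definition Phi {nx ny} (A : 'M[R]_nx) (C : 'M[R]_(ny, nx)) (k : time)
  (L : 'M[R]_(nx, ny)) : 'M[R]_ny :=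
  match k with
  | TFin 0 => 1%:M
  | TFin k => 1%:M - C *m (\sum_(l < k) (A - L *m C) ^+ (k - l - 1) *m L)
  | TInf => 1%:M - C *m invmx (1%:M - A + L *m C) *m L
  end.

(* D_a for compromised sensors j_1 < ... < j_na, given as j : 'I_na -> 'I_ny *)
Definition Da {ny na} (j : 'I_na -> 'I_ny) : 'M[R]_(ny, na) :=
  \matrix_(r, i) (r == j i)%:R.

Definition Qmat {nx ny nw na} (A : 'M[R]_nx) (C : 'M[R]_(ny, nx))
  (Bw : 'M[R]_(nx, nw)) (Dw : 'M[R]_(ny, nw)) (j : 'I_na -> 'I_ny) (k : time)
  (L : 'M[R]_(nx, ny)) : 'M[R]_na :=
  2^-1 *: ((Da j)^T *m (Phi A C k L)^T *m invmx (Sigma_r A C Bw Dw L)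
            *m Phi A C k L *m Da j).

(* J_k(L) = inf { (1/2) a^T D^T Phi^T Sigma^-1 Phi D a | a^T D^T W D a >= 1 }
   (value +oo when the feasible set is empty) *)
Definition Jk {nx ny nw na} (A : 'M[R]_nx) (C : 'M[R]_(ny, nx))
  (Bw : 'M[R]_(nx, nw)) (Dw : 'M[R]_(ny, nw)) (W : 'M[R]_ny)
  (j : 'I_na -> 'I_ny) (k : time) (L : 'M[R]_(nx, ny)) : \bar R :=
  ereal_inf [set ((a^T *m Qmat A C Bw Dw j k L *m a) 0 0)%:E
            | a in [set a : 'cV[R]_na | 1 <= (a^T *m ((Da j)^T *m W *m Da j) *m a) 0 0]].

Definition Jlmi {nx ny nw na} (A : 'M[R]_nx) (C : 'M[R]_(ny, nx))
  (Bw : 'M[R]_(nx, nw)) (Dw : 'M[R]_(ny, nw)) (W : 'M[R]_ny)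
  (j : 'I_na -> 'I_ny) (k : time) (L : 'M[R]_(nx, ny)) : \bar R :=
  ereal_sup [set lam%:E | lam in [set lam : R | 0 <= lam /\
     psd (Qmat A C Bw Dw j k L - lam *: ((Da j)^T *m W *m Da j))]].

End Defs.

From HB Require Import structures.
From mathcomp Require Import all_boot all_order all_algebra.
From mathcomp Require Import complex.
From mathcomp Require Import boolp classical_sets reals constructive_ereal ereal.
From mathcomp Require Import lra.
Set Implicit Arguments. Unset Strict Implicit. Unset Printing Implicit Defensive.
Import Order.TTheory GRing.Theory Num.Theory.
Local Open Scope ring_scope.

(* [Jk] is the infimum of [a^T Q a] over [a^T M a >= 1], with [Q = Qmat] and [M = Da^T W Da].
   For psd [Q] and [M] this infimum is the largest [lam >= 0] such that [Q - lam M] is psd: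
   rescale [a] so that [a^T M a = 1].
   [Q] is psd because [Sigma_r] is psd and invertible, and every solution [X] of a Lyapunov
   equation [X = F X F^T + P P^T] with [rho(F) < 1] is psd: its quadratic form does not increase
   along [y |-> y F], while [y F^N] tends to 0. The latter follows from Cayley-Hamilton: the
   product of the [F - z] over the eigenvalues [z] of [F] vanishes, and removing one factor at a
   time leaves affine recurrences of ratio [z], [|z| < 1].
   The reformulated design problem then has the same value by an exchange of suprema. *)

Section Vanishing.
Variable R : archiRealFieldType.

(* Only an upper bound: the sequences in question are norms. *)
Definition vanishing (a : nat -> R) :=
  forall e, 0 < e -> exists N0, forall N, (N0 <= N)%N -> a N <= e.

Lemma bernoulli_ineq (h : R) m : 0 <= h -> m%:R * h <= (1 + h) ^+ m.
Proof.
move=> h0; elim: m => [|m IH]; first by rewrite mul0r expr0.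
have h1 : 1 <= (1 + h) ^+ m by apply: exprn_ege1; lra.
have hh : h <= h * (1 + h) ^+ m by rewrite ler_peMr.
rewrite exprS -natr1 mulrDl mul1r mulrDl mul1r; lra.
Qed.

Lemma vanishing_geometric (r K : R) : 0 <= r < 1 -> vanishing (fun m => r ^+ m * K).
Proof.
move=> /andP[r0 r1] d d0.
have [K0|K0] := lerP K 0.
  by exists 0%N => m _; apply: le_trans (ltW d0); rewrite mulr_ge0_le0 ?exprn_ge0.
have [->|rn0] := eqVneq r 0.
  by exists 1%N => -[|m] //= _; rewrite expr0n mul0r ltW.
set h := r^-1 - 1.
have h0 : 0 < h by rewrite subr_gt0 invf_gt1 // lt0r rn0.
have rmh m : r ^+ m * (m%:R * h) <= 1.
  have := bernoulli_ineq m (ltW h0); rewrite [1 + h]addrC subrK exprVn => le_mh.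
  by rewrite -[leRHS](mulfV (expf_neq0 m rn0)); apply: ler_wpM2l; rewrite ?exprn_ge0.
exists (Num.bound (K / (d * h))) => m le_m.
have : K / (d * h) < m%:R.
  apply: (lt_le_trans (archi_boundP _)); rewrite ?ler_nat ?divr_ge0 ?mulr_ge0 ?ltW //.
rewrite ltr_pdivrMr ?mulr_gt0 // => le_K.
have := rmh m; have : 0 <= r ^+ m by rewrite exprn_ge0.
nra.
Qed.

(* Once [t N <= e (1 - r) / 2], the sequence [a N - e / 2] is dominated by a geometric one. *)
Lemma vanishing_contraction (a t : nat -> R) (r : R) : 0 <= r < 1 ->
  (forall N, a N.+1 <= r * a N + t N) -> vanishing t -> vanishing a.
Proof.
move=> r01 rec vt e e0; have /andP[r0 r1] := r01.
have [N0 tN0] := vt (e * (1 - r) / 2) ltac:(apply: divr_gt0 => //; nra).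
have shifted m : a (N0 + m)%N - e / 2 <= r ^+ m * (a N0 - e / 2).
  elim: m => [|m IH]; first by rewrite addn0 expr0 mul1r.
  rewrite addnS exprS -mulrA.
  have := rec (N0 + m)%N; have := tN0 (N0 + m)%N (leq_addr _ _).
  have : r * (a (N0 + m)%N - e / 2) <= r * (r ^+ m * (a N0 - e / 2)) by rewrite ler_wpM2l.
  nra.
have geo : vanishing (fun m => r ^+ m * (a N0 - e / 2)) by exact: vanishing_geometric.
have [m0 {}geo] := geo (e / 2) ltac:(lra).
exists (N0 + m0)%N => N le_N; have le_N0N := leq_trans (leq_addr _ _) le_N.
rewrite -(subnKC le_N0N); have := shifted (N - N0)%N.
by have := geo (N - N0)%N; rewrite leq_subRL // => /(_ le_N); lra.
Qed.

Lemma vanishing_uniform n (a : 'I_n -> nat -> R) : (forall i, vanishing (a i)) ->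
  forall e, 0 < e -> exists N0, forall N, (N0 <= N)%N -> forall i, a i N <= e.
Proof.
move=> va e e0.
have /choice [N0 aN0] : forall i, exists N0, forall N, (N0 <= N)%N -> a i N <= e.
  by move=> i; apply: va.
exists (\max_i N0 i)%N => N le_N i; apply: aN0.
exact: leq_trans (leq_bigmax i) le_N.
Qed.

End Vanishing.

Section StableMatrix.
Variable R : realType.
Local Open Scope complex_scope.
Local Notation normc := (@Normc.normc R).

Lemma normcE (z : R[i]) : `|z| = (normc z)%:C.
Proof. by case: z. Qed.

Lemma normc_real (a : R) : normc a%:C = `|a|.
Proof. by rewrite /= expr0n addr0 sqrtr_sqr. Qed.

Lemma vanishing_affine_recurrence (s t : nat -> R[i]) (z : R[i]) : `|z| < 1 ->
  (forall N, s N.+1 = z * s N + t N) -> vanishing (normc \o t) ->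
  vanishing (normc \o s).
Proof.
move=> z1 rec vt; apply: (vanishing_contraction (r := normc z)) vt.
  by rewrite -ltcR -normcE z1 andbT -lecR -normcE normr_ge0.
by move=> N; rewrite /= rec -Normc.normcM; apply: le_normcD.
Qed.

Lemma vanishing_annihilated n (M : 'M[R[i]]_n) (rs : seq R[i]) (w : 'rV_n) :
  {in rs, forall z, `|z| < 1} -> w *m \prod_(z <- rs) (M - z%:M) = 0 ->
  forall i, vanishing (fun N => normc ((w *m M ^+ N) 0 i)).
Proof.
elim: rs w => [|z rs IH] w rs1.
  rewrite big_nil mulmx1 => -> i e e0; exists 0%N => N _.
  by rewrite mul0mx mxE Normc.normc0 ltW.
rewrite big_cons mulmxA => w0 i.
have IHz := IH _ (fun y yrs => rs1 y (@mem_behead _ (z :: rs) y yrs)) w0 i.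
apply: (vanishing_affine_recurrence (rs1 z (mem_head z rs)) _ IHz) => N.
rewrite exprS -mulmxE mulmxA.
have -> : w *m M = w *m (M - z%:M) + z *: w by rewrite mulmxBr mul_mx_scalar subrK.
by rewrite mulmxDl -scalemxAl !mxE addrC.
Qed.

Lemma spec_rad_lt1_vanishing n (F : 'M[R]_n) (x : 'rV_n) i : spec_rad_lt1 F ->
  vanishing (fun N => `|(x *m F ^+ N) 0 i|).
Proof.
case: n F x i => [|n] F x i; first by case: i.
move=> stableF; set M := cmx F.
have [rs char_rs] := closed_field_poly_normal (char_poly M).
rewrite (monicP (char_poly_monic M)) scale1r in char_rs.
have rs1 : {in rs, forall z, `|z| < 1}.
  by move=> z zrs; apply: stableF; rewrite eigenvalue_root_char char_rs root_prod_XsubC.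
have prod0 : \prod_(z <- rs) (M - z%:M) = 0.
  have := Cayley_Hamilton M; rewrite char_rs rmorph_prod.
  by under eq_bigr do rewrite rmorphB /= horner_mx_X horner_mx_C.
have cmxX N : cmx (F ^+ N) = M ^+ N := rmorphXn (map_mx (real_complex R) : 'M_n.+1 -> _) N F.
have -> : (fun N => `|(x *m F ^+ N) 0 i|) = (fun N => normc ((cmx x *m M ^+ N) 0 i)).
  by apply: funext => N; rewrite -cmxX -map_mxM [in RHS]mxE normc_real.
by apply: (@vanishing_annihilated _ M rs (cmx x) rs1); rewrite prod0 mulmx0.
Qed.

End StableMatrix.

Section QuadraticForms.
Variable R : realType.

Definition qform {n} (M : 'M[R]_n) (v : 'cV_n) : R := (v^T *m M *m v) 0 0.

Lemma qform_conj n m (X : 'M[R]_n) (B : 'M_(n, m)) v :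
  qform (B^T *m X *m B) v = qform X (B *m v).
Proof. by rewrite /qform trmx_mul !mulmxA. Qed.

Lemma qformD n (X Y : 'M[R]_n) v : qform (X + Y) v = qform X v + qform Y v.
Proof. by rewrite /qform mulmxDr mulmxDl mxE. Qed.

Lemma qformZ n (X : 'M[R]_n) c v : qform (c *: X) v = c * qform X v.
Proof. by rewrite /qform -scalemxAr -scalemxAl mxE. Qed.

Lemma qformBZ n (X Y : 'M[R]_n) c v : qform (X - c *: Y) v = qform X v - c * qform Y v.
Proof. by rewrite /qform mulmxBr mulmxBl -scalemxAr -scalemxAl !mxE. Qed.

Lemma qform_scalev n (X : 'M[R]_n) c v : qform X (c *: v) = c ^+ 2 * qform X v.
Proof. by rewrite /qform [(c *: v)^T]linearZ /= -scalemxAr -!scalemxAl scalerA mxE expr2. Qed.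

Lemma qform_tr n (X : 'M[R]_n) v : qform X^T v = qform X v.
Proof.
rewrite /qform; have -> : v^T *m X^T *m v = (v^T *m X *m v)^T.
  by rewrite !trmx_mul trmxK mulmxA.
by rewrite mxE.
Qed.

Lemma qform_mul_tr n m (B : 'M[R]_(n, m)) v : qform (B *m B^T) v = \sum_k (B^T *m v) k 0 ^+ 2.
Proof.
rewrite /qform; have -> : v^T *m (B *m B^T) *m v = (B^T *m v)^T *m (B^T *m v).
  by rewrite trmx_mul trmxK !mulmxA.
by rewrite mxE; apply: eq_bigr => k _; rewrite mxE expr2.
Qed.

Lemma psd_mul_tr n m (B : 'M[R]_(n, m)) : psd (B *m B^T).
Proof. by move=> v; rewrite -/(qform _ v) qform_mul_tr sumr_ge0 // => k _; rewrite sqr_ge0. Qed.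

Lemma psd_conj n m (X : 'M[R]_n) (B : 'M_(n, m)) : psd X -> psd (B^T *m X *m B).
Proof. by move=> psdX v; rewrite -/(qform _ v) qform_conj; apply: psdX. Qed.

Lemma psdD n (X Y : 'M[R]_n) : psd X -> psd Y -> psd (X + Y).
Proof. by move=> psdX psdY v; rewrite -/(qform _ v) qformD (addr_ge0 (psdX v) (psdY v)). Qed.

Lemma psdZ n (X : 'M[R]_n) c : 0 <= c -> psd X -> psd (c *: X).
Proof. by move=> c0 psdX v; rewrite -/(qform _ v) qformZ (mulr_ge0 c0 (psdX v)). Qed.

Lemma psd_invmx n (S : 'M[R]_n) : S \in unitmx -> psd S -> psd (invmx S).
Proof.
move=> Su psdS v; rewrite -[v](mulKVmx Su) -/(qform _ _) -qform_conj.
by rewrite -mulmxA mulVmx // mulmx1 qform_tr; apply: psdS.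
Qed.

Lemma qform_le_entries n (X : 'M[R]_n) (v : 'cV_n) d : 0 <= d ->
  (forall i, `|v i 0| <= d) -> `|qform X v| <= d * d * \sum_i \sum_j `|X j i|.
Proof.
move=> d0 vd; rewrite /qform mxE mulr_sumr.
apply: (le_trans (ler_norm_sum _ _ _)); apply: ler_sum => i _.
rewrite !mxE normrM [d * d * _]mulrAC; apply: ler_pM => //.
rewrite mulr_sumr; apply: (le_trans (ler_norm_sum _ _ _)); apply: ler_sum => j _.
by rewrite !mxE normrM ler_wpM2r.
Qed.

End QuadraticForms.

Section Lyapunov.
Variable R : realType.

Lemma lyapunov_qform_le n m (F X : 'M[R]_n) (P : 'M_(n, m)) (y : 'rV_n) :
  X = F *m X *m F^T + P *m P^T -> qform X (y *m F)^T <= qform X y^T.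
Proof.
move=> lyapX.
have -> : qform X y^T = qform X (y *m F)^T + qform (P *m P^T) y^T.
  by rewrite {1}lyapX qformD -{1}[F]trmxK qform_conj trmx_mul.
by rewrite lerDl; apply: psd_mul_tr.
Qed.

Lemma lyapunov_psd n m (F X : 'M[R]_n) (P : 'M_(n, m)) :
  spec_rad_lt1 F -> X = F *m X *m F^T + P *m P^T -> psd X.
Proof.
move=> stableF lyapX v; rewrite -/(qform X v) -[v]trmxK; set y := v^T.
have orbit_le N : qform X (y *m F ^+ N)^T <= qform X y^T.
  elim: N => [|N IH]; first by rewrite expr0 mulmx1.
  rewrite exprSr -mulmxE mulmxA; exact: le_trans (lyapunov_qform_le _ lyapX) IH.
set K := \sum_i \sum_j `|X j i|.
have K0 : 0 <= K by rewrite sumr_ge0 // => i _; rewrite sumr_ge0.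
apply/ler_addgt0Pr => e e0.
set d := Num.sqrt (e / (K + 1)).
have dd : d * d = e / (K + 1) by rewrite -expr2 sqr_sqrtr // divr_ge0 ?ltW // ltr_wpDl.
have ddK : d * d * K <= e.
  by rewrite dd mulrAC ler_pdivrMr ?ltr_wpDl //; nra.
have d0 : 0 < d by rewrite sqrtr_gt0 divr_gt0 // ltr_wpDl.
have [N0 yN0] := vanishing_uniform (fun i => spec_rad_lt1_vanishing y i stableF) d0.
have entries_le i : `|(y *m F ^+ N0)^T i 0| <= d by rewrite mxE yN0.
have := qform_le_entries X (ltW d0) entries_le; rewrite -/K ler_norml => /andP[+ _].
by have := orbit_le N0; lra.
Qed.

End Lyapunov.

Section NoiseCovariance.
Variables (R : realType) (nx ny nw : nat).
Variables (A : 'M[R]_nx) (C : 'M[R]_(ny, nx)) (Bw : 'M[R]_(nx, nw)) (Dw : 'M[R]_(ny, nw)).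
Variable L : 'M[R]_(nx, ny).
Hypothesis stableL : spec_rad_lt1 (A - L *m C).

(* If the Lyapunov equation had no solution, [xget] would return the junk value 0,
   which is psd too. *)
Lemma Sigma_x_psd : psd (Sigma_x A C Bw Dw L).
Proof.
rewrite /Sigma_x; case: xgetP => [S _ lyapS|_]; first exact: lyapunov_psd stableL lyapS.
by move=> v; rewrite mulmx0 mul0mx mxE.
Qed.

Lemma Sigma_r_psd : psd (Sigma_r A C Bw Dw L).
Proof.
apply: psdD; last exact: psd_mul_tr.
by rewrite -{1}[C]trmxK; apply: psd_conj Sigma_x_psd.
Qed.

Lemma Qmat_psd na (j : 'I_na -> 'I_ny) k :
  Sigma_r A C Bw Dw L \in unitmx -> psd (Qmat A C Bw Dw j k L).
Proof.
move=> Sigma_r_unit; apply: psdZ; first by rewrite invr_ge0 ler0n.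
have := psd_conj (Phi A C k L *m Da R j) (psd_invmx Sigma_r_unit Sigma_r_psd).
by rewrite trmx_mul !mulmxA.
Qed.

End NoiseCovariance.

Section ConstrainedMinimum.
Variables (R : realType) (n : nat) (Q M : 'M[R]_n).
Hypotheses (psdQ : psd Q) (psdM : psd M).

Let minQ := ereal_inf [set (qform Q a)%:E | a in [set a | 1 <= qform M a]].

Lemma psd_subZ_le_inf lam : 0 <= lam -> psd (Q - lam *: M) <-> (lam%:E <= minQ)%E.
Proof.
rewrite /minQ => lam0; split=> [psdQM | le_min v].
  apply: le_ereal_inf_tmp => _ [a /= Ma1 <-]; rewrite lee_fin.
  by have := psdQM a; rewrite -/(qform _ a) qformBZ; nra.
rewrite -/(qform _ v) qformBZ subr_ge0.
have := psdM v; rewrite -/(qform _ v) le_eqVlt => /orP[/eqP <-|Mv0].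
  by rewrite mulr0; apply: psdQ.
set t := Num.sqrt (qform M v).
have t0 : 0 < t by rewrite sqrtr_gt0.
have tt : t ^+ 2 = qform M v by rewrite sqr_sqrtr // ltW.
have : (lam%:E <= (qform Q (t^-1 *: v))%:E)%E.
  apply: (le_trans le_min); apply: ereal_inf_lbound; exists (t^-1 *: v) => //=.
  by rewrite qform_scalev exprVn tt mulVf ?gt_eqF.
by rewrite lee_fin qform_scalev exprVn tt ler_pdivlMl // mulrC.
Qed.

Lemma ereal_inf_qform_eq_sup :
  minQ = ereal_sup [set lam%:E | lam in [set lam | 0 <= lam /\ psd (Q - lam *: M)]].
Proof.
apply/eqP; rewrite eq_le; apply/andP; split; last first.
  by apply: ge_ereal_sup => _ [lam [lam0 /psd_subZ_le_inf] /(_ lam0) le_min <-].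
have : (0%:E <= minQ)%E by apply: le_ereal_inf_tmp => _ [a _ <-]; rewrite lee_fin; apply: psdQ.
case: minQ (@psd_subZ_le_inf) => [r | | //] le_minP min0.
  have r0 : 0 <= r by rewrite -lee_fin.
  by apply: ereal_sup_ubound; exists r => //; split => //; apply/le_minP.
rewrite -ereal_sup_real; apply: ge_ereal_sup => _ [r _ <-].
have r0 : 0 <= Num.max r 0 by rewrite le_max lexx orbT.
apply: (@le_trans _ _ (Num.max r 0)%:E); first by rewrite lee_fin le_max lexx.
by apply: ereal_sup_ubound; exists (Num.max r 0) => //; split => //; apply/le_minP; rewrite ?leey.
Qed.

End ConstrainedMinimum.

Lemma ereal_sup_bigcup (R : realType) T (D : set T) (S : T -> set (\bar R)) :
  ereal_sup [set ereal_sup (S i) | i in D] = ereal_sup (\bigcup_(i in D) S i).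
Proof.
apply/eqP; rewrite eq_le; apply/andP; split.
  by apply: ge_ereal_sup => _ [i Di <-]; apply/ereal_sup_le/bigcup_sup.
apply: ge_ereal_sup => x [i Di Six]; apply: (le_trans (ereal_sup_ubound Six)).
by apply: ereal_sup_ubound; exists i.
Qed.

Theorem lemma1 (R : realType) (nx ny nw na : nat)
  (A : 'M[R]_nx) (C : 'M[R]_(ny, nx)) (Bw : 'M[R]_(nx, nw)) (Dw : 'M[R]_(ny, nw))
  (W : 'M[R]_ny) (j : 'I_na -> 'I_ny) (k : time) :
  detectable A C ->
  stabilizable A Bw ->
  W^T = W -> psd W ->
  {homo j : a b / (a < b)%N >-> (a < b)%N} ->
  (forall L : 'M[R]_(nx, ny), spec_rad_lt1 (A - L *m C) ->
     Sigma_r A C Bw Dw L \in unitmx) ->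
  (k = TFin 0 \/ k = TFin 1 \/ k = TInf) ->
  (forall L : 'M[R]_(nx, ny), spec_rad_lt1 (A - L *m C) ->
     Jk A C Bw Dw W j k L = Jlmi A C Bw Dw W j k L)
  /\
  ereal_sup [set Jk A C Bw Dw W j k L
            | L in [set L : 'M[R]_(nx, ny) | spec_rad_lt1 (A - L *m C)]]
  = ereal_sup [set lam%:E | lam in [set lam : R | 0 <= lam /\
       exists L : 'M[R]_(nx, ny), spec_rad_lt1 (A - L *m C) /\
         psd (Qmat A C Bw Dw j k L - lam *: ((Da R j)^T *m W *m Da R j))]].
Proof.
move=> _ _ _ psdW _ Sigma_r_unit _.
have Jk_Jlmi L : spec_rad_lt1 (A - L *m C) -> Jk A C Bw Dw W j k L = Jlmi A C Bw Dw W j k L.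
  move=> stableL; apply: ereal_inf_qform_eq_sup; last exact: psd_conj.
  exact/Qmat_psd/Sigma_r_unit.
split=> //; rewrite (eq_imagel Jk_Jlmi) ereal_sup_bigcup; congr ereal_sup.
apply/seteqP; split=> [_ [L stableL [lam [lam0 psdL] <-]] | _ [lam [lam0 [L [stableL psdL]]] <-]].
  by exists lam => //; split => //; exists L.
by exists L => //; exists lam.
Qed.
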